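(* Let $\hat\nabla$ be a torsion-free connection on $TM$, $E\to M$ a vector bundle with connection $\nabla$, $p\in M$, and $(e^1,\dots,e^n)$ coordinates about $p$ with coordinate vector fields $e_i$, such that all higher-order Christoffel symbols vanish at $p$: $\Gamma^k_{I,j}(p)=0$ for all nonempty words $I$ and all $j,k$. Then for all $s\ge0$: (1) $[\hat\nabla^s\Gamma^k_{I,j}]_p=0$ for all nonempty words $I$ and all $j,k$; (2) $[\hat\nabla^sR^{TM}]_p=0$; (3) for every word $S=i_1\cdots i_s$ and $\alpha\in C^\infty(E)$, $[\nabla^s_{e_S}\alpha]_p=[\nabla_{e_{i_1}}\circ\cdots\circ\nabla_{e_{i_s}}\alpha]_p$; (4) for every word $S$ of length $s$ and every $n$-dimensional multi-index $T$ (no restriction on $|T|$), $[\hat\nabla^s_{e_S}\frac{(e-p)^T}{T!}]_p=\delta_{\langle S\rangle,T}$, and for $\alpha\in C^\infty(E)$, $\big[\nabla^s_{e_S}\frac{(e-p)^T\alpha}{T!}\big]_p=\delta_{\langle S_{(1)}\rangle,T}\,\big(\nabla^{|S_{(2)}|}_{e_{S_{(2)}}}\alpha\big)_p$, with Sweedler summation over the unshuffle coproduct of the word $S$.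
   Context: Higher covariant derivatives: $\nabla^0=\mathrm{Id}$, $\nabla^1_X=\nabla_X$, $\nabla^{j+1}_{X_0,\dots,X_j}\alpha=\nabla_{X_0}(\nabla^j_{X_1,\dots,X_j}\alpha)-\sum_{k=1}^j\nabla^j_{X_1,\dots,\hat\nabla_{X_0}X_k,\dots,X_j}\alpha$, extended $C^\infty(M)$-linearly to $v\in C^\infty(\otimes^jTM)$; $\hat\nabla^j$ is the same construction for tensor bundles of $TM$ with the connection induced by $\hat\nabla$. For a word $I=i_1\cdots i_m$ in $\{1,\dots,n\}$, $e_I=e_{i_1}\otimes\cdots\otimes e_{i_m}$; higher-order Christoffel symbols are defined by $\hat\nabla^{|I|}_{e_I}e_j=\Gamma^k_{I,j}e_k$. $R^{TM}_{X,Y}=\hat\nabla^2_{X,Y}-\hat\nabla^2_{Y,X}$. Unshuffle coproduct on words: $\Delta(i_1\cdots i_s)=\sum_{r}\sum_{\sigma\in Sh(r,s-r)}(i_{\sigma(1)}\cdots i_{\sigma(r)})\otimes(i_{\sigma(r+1)}\cdots i_{\sigma(s)})$, written $S_{(1)}\otimes S_{(2)}$. $(e-p)^T=\prod_i(e^i-e^i(p))^{T_i}$, $T!=\prod T_i!$, and $\langle S\rangle$ is the multi-index counting occurrences of each letter in $S$. *)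

(* Local (coordinate-chart) model of Lemma 2.14: the chart image is an open
   set U of R^n = 'rV[R]_n, the coordinate vector fields are the standard
   directions, the bundle E is trivialised over U with frame (f_b)_{b<r}. *)
From HB Require Import structures.
From mathcomp Require Import all_boot all_order all_algebra.
From mathcomp Require Import all_classical all_reals all_analysis.
Set Implicit Arguments. Unset Strict Implicit. Unset Printing Implicit Defensive.
Import Order.TTheory GRing.Theory Num.Theory.
Import numFieldNormedType.Exports.
Local Open Scope classical_set_scope.
Local Open Scope ring_scope.

Definition partial {R : realType} {n : nat} (i : 'I_n)
  (f : 'rV[R]_n -> R) (x : 'rV[R]_n) : R := 'D_(delta_mx 0 i) f x.

Fixpoint iter_partial {R : realType} {n : nat} (ws : seq 'I_n)
  (f : 'rV[R]_n -> R) : 'rV[R]_n -> R :=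
  match ws with [::] => f | i :: ws' => partial i (iter_partial ws' f) end.

Definition smooth_on {R : realType} {n : nat} (U : set 'rV[R]_n)
  (f : 'rV[R]_n -> R) : Prop :=
  forall (ws : seq 'I_n) (x : 'rV[R]_n), U x -> differentiable (iter_partial ws f) x.

(* Component field of a (possibly B-twisted) tensor field:
   value at (lower indices L, upper indices Up, twist index b, point x). *)
Definition cfield (R : realType) (n : nat) (B : finType) :=
  seq 'I_n -> seq 'I_n -> B -> 'rV[R]_n -> R.

(* Higher covariant derivative (components on coordinate frames), following
   the recursive definition
   nabla^{j+1}_{X0..Xj} a = nabla_{X0}(nabla^j_{X1..Xj} a)
                            - sum_k nabla^j_{X1,..,hat-nabla_{X0}X_k,..,Xj} a.
   Conventions: hat-nabla_{e_i} e_j = sum_k G i j k e_k   (TM connection),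
                nabla_{e_i} f_b = sum_b' A i b b' f_b'    (twist connection). *)
Fixpoint hc {R : realType} {n : nat} {B : finType}
  (G : 'I_n -> 'I_n -> 'I_n -> 'rV[R]_n -> R)
  (A : 'I_n -> B -> B -> 'rV[R]_n -> R)
  (F : cfield R n B) (d : nat) (S : seq 'I_n) : cfield R n B :=
  match d, S with
  | d'.+1, i0 :: W => fun L Up b x =>
      partial i0 (fun y => hc G A F d' W L Up b y) x
      + \sum_(b' : B) A i0 b' b x * hc G A F d' W L Up b' x
      - \sum_(k < size L) \sum_(m < n)
          G i0 (nth i0 L k) m x * hc G A F d' W (set_nth m L k m) Up b x
      + \sum_(k < size Up) \sum_(m < n)
          G i0 m (nth i0 Up k) x * hc G A F d' W L (set_nth m Up k m) b x
      - \sum_(k < size W) \sum_(m < n)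
          G i0 (nth i0 W k) m x * hc G A F d' (set_nth m W k m) L Up b x
  | _, _ => F
  end.

Definition hcov {R : realType} {n : nat} {B : finType}
  (G : 'I_n -> 'I_n -> 'I_n -> 'rV[R]_n -> R)
  (A : 'I_n -> B -> B -> 'rV[R]_n -> R)
  (F : cfield R n B) (S : seq 'I_n) : cfield R n B :=
  hc G A F (size S) S.

Definition hcovT {R : realType} {n : nat}
  (G : 'I_n -> 'I_n -> 'I_n -> 'rV[R]_n -> R)
  (F : cfield R n unit) (S : seq 'I_n) : cfield R n unit :=
  hcov G (fun _ _ _ _ => 0) F S.

Definition vecfield {R : realType} {n : nat} (j : 'I_n) : cfield R n unit :=
  fun L Up _ _ => if Up is [:: k] then (k == j)%:R else 0.

Definition scalarfield {R : realType} {n : nat} (f : 'rV[R]_n -> R)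
  : cfield R n unit := fun _ _ _ x => f x.

Definition sectionf {R : realType} {n r : nat} (a : 'I_r -> 'rV[R]_n -> R)
  : cfield R n 'I_r := fun _ _ b x => a b x.

(* higher-order Christoffel symbols: hat-nabla^{|I|}_{e_I} e_j = Gamma^k_{I,j} e_k *)
Definition chr {R : realType} {n : nat}
  (G : 'I_n -> 'I_n -> 'I_n -> 'rV[R]_n -> R)
  (k : 'I_n) (W : seq 'I_n) (j : 'I_n) (x : 'rV[R]_n) : R :=
  hcovT G (vecfield j) W [::] [:: k] tt x.

(* R^{TM}(e_a,e_b) e_c = sum_d Rcomp_{abc}^d e_d, with
   R^{TM}_{X,Y} = hat-nabla^2_{X,Y} - hat-nabla^2_{Y,X} *)
Definition Rcomp {R : realType} {n : nat}
  (G : 'I_n -> 'I_n -> 'I_n -> 'rV[R]_n -> R) : cfield R n unit :=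
  fun L Up _ x =>
    match L, Up with
    | [:: a; b; c], [:: d] => chr G d [:: a; b] c x - chr G d [:: b; a] c x
    | _, _ => 0
    end.

Definition cov1 {R : realType} {n r : nat}
  (A : 'I_n -> 'I_r -> 'I_r -> 'rV[R]_n -> R) (i : 'I_n)
  (a : 'I_r -> 'rV[R]_n -> R) : 'I_r -> 'rV[R]_n -> R :=
  fun b x => partial i (a b) x + \sum_(b' < r) A i b' b x * a b' x.

Definition iter_cov {R : realType} {n r : nat}
  (A : 'I_n -> 'I_r -> 'I_r -> 'rV[R]_n -> R) (S : seq 'I_n)
  (a : 'I_r -> 'rV[R]_n -> R) : 'I_r -> 'rV[R]_n -> R :=
  foldr (fun i b => cov1 A i b) a S.

Definition monomial {R : realType} {n : nat} (p : 'rV[R]_n) (T : 'I_n -> nat)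
  (x : 'rV[R]_n) : R :=
  (\prod_(i < n) (x ord0 i - p ord0 i) ^+ T i) / (\prod_(i < n) (T i)`!)%:R.

Definition letters {n : nat} (S : seq 'I_n) : 'I_n -> nat :=
  fun i => count_mem i S.

Definition kdelta {R : realType} {n : nat} (P Q : 'I_n -> nat) : R :=
  if [forall i, P i == Q i] then 1 else 0.

(* unshuffle coproduct: shuffles in Sh(r, s-r) <-> subsets of positions *)
Definition unshuffle {n : nat} (S : seq 'I_n) : seq (seq 'I_n * seq 'I_n) :=
  [seq (mask (val m) S, mask (map negb (val m)) S)
  | m <- enum {: (size S).-tuple bool}].

From HB Require Import structures.
From mathcomp Require Import all_boot all_order all_algebra.
From mathcomp Require Import all_classical all_reals all_analysis.
From mathcomp Require Import ring.
Import Order.TTheory GRing.Theory Num.Theory.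
Import numFieldNormedType.Exports.
Local Open Scope classical_set_scope.
Local Open Scope ring_scope.

(* Every higher-order Christoffel symbol vanishes at p.  By [chr_cons], a
   partial derivative of such a symbol is expressed through symbols of longer
   words and products with [G], so induction on the order shows that all of
   them, and in particular the connection coefficients [G], are flat at p.
   Each correction term in the recursive formula for a higher covariant
   derivative carries a factor of [G]; hence, modulo functions flat at p, the
   covariant derivative is the iterated twisted partial derivative, and the
   two agree at p.  What remains is Leibniz's rule for iterated partial
   derivatives, which produces the unshuffle coproduct, and the elementary
   derivatives of the monomials (e - p)^T / T!. *)

Definition eq_on {R : realType} {n : nat} (U : set 'rV[R]_n)
  (f g : 'rV[R]_n -> R) := forall x, U x -> f x = g x.

(* Only derivability along the coordinate directions is required, which is
   weaker than [smooth_on]. *)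
Definition smooth_upto {R : realType} {n : nat} (U : set 'rV[R]_n) (N : nat)
  (f : 'rV[R]_n -> R) := forall ws : seq 'I_n, (size ws <= N)%N ->
  forall x (i : 'I_n), U x -> derivable (iter_partial ws f) x (delta_mx 0 i).

Definition csmooth {R : realType} {n : nat} (U : set 'rV[R]_n)
  (f : 'rV[R]_n -> R) := forall N, smooth_upto U N f.

Section CoordinateSmoothness.
Context {R : realType} {n : nat} {U : set 'rV[R]_n} (oU : open U).
Implicit Types (f g : 'rV[R]_n -> R) (ws : seq 'I_n) (x : 'rV[R]_n).
Local Notation eq_on := (eq_on U).
Local Notation smooth_upto := (smooth_upto U).
Local Notation csmooth := (csmooth U).

Lemma near_in_U {x} : U x -> \forall y \near x, U y.
Proof. by move=> Ux; apply: open_nbhs_nbhs; split. Qed.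

Lemma partial_eq_on {f g} i : eq_on f g -> eq_on (partial i f) (partial i g).
Proof.
move=> fg x Ux; rewrite /partial; apply: near_eq_derive.
exact: filterS fg (near_in_U Ux).
Qed.

Lemma iter_partial_eq_on ws {f g} :
  eq_on f g -> eq_on (iter_partial ws f) (iter_partial ws g).
Proof. by elim: ws => //= i ws IH fg; apply: partial_eq_on; apply: IH. Qed.

Lemma iter_partial_cat ws1 ws2 f :
  iter_partial (ws1 ++ ws2) f = iter_partial ws1 (iter_partial ws2 f).
Proof. by elim: ws1 => //= i ws IH; rewrite IH. Qed.

Lemma derivable_eq_on {f g x v} :
  eq_on f g -> U x -> derivable f x v -> derivable g x v.
Proof. by move=> fg Ux; apply: near_eq_derivable; exact: filterS fg (near_in_U Ux). Qed.

Lemma smooth_upto_eq_on {N f g} : eq_on f g -> smooth_upto N f -> smooth_upto N g.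
Proof.
move=> fg sf ws hs x i Ux.
exact: derivable_eq_on (iter_partial_eq_on ws fg) Ux (sf ws hs x i Ux).
Qed.

Lemma csmooth_eq_on {f g} : eq_on f g -> csmooth f -> csmooth g.
Proof. by move=> fg sf N; apply: smooth_upto_eq_on fg _. Qed.

Lemma smooth_upto_le {M N f} : (M <= N)%N -> smooth_upto N f -> smooth_upto M f.
Proof. by move=> MN sf ws hs; apply: sf; apply: leq_trans MN. Qed.

Lemma smooth_upto_partial {N f} i : smooth_upto N.+1 f -> smooth_upto N (partial i f).
Proof.
move=> sf ws hs x j Ux.
have -> : iter_partial ws (partial i f) = iter_partial (ws ++ [:: i]) f.
  by rewrite iter_partial_cat.
by apply: sf => //; rewrite size_cat addn1.
Qed.

Lemma csmooth_partial {f} i : csmooth f -> csmooth (partial i f).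
Proof. by move=> sf N; apply: smooth_upto_partial. Qed.

Lemma csmooth_iter_partial ws {f} : csmooth f -> csmooth (iter_partial ws f).
Proof. by elim: ws => //= i ws IH sf; apply: csmooth_partial; apply: IH. Qed.

Lemma smooth_on_csmooth {f} : smooth_on U f -> csmooth f.
Proof. by move=> sf N ws _ x i Ux; apply: diff_derivable; apply: sf. Qed.

Lemma iter_partial_cst ws (c : R) : iter_partial ws (fun _ : 'rV[R]_n => c) =
  fun _ => if ws is [::] then c else 0.
Proof.
elim: ws => //= i ws ->; apply/funext => x.
by rewrite /partial; case: ws => [|? ?]; exact: derive_cst.
Qed.

Lemma csmooth_cst (c : R) : csmooth (fun _ => c).
Proof. by move=> N ws _ x i Ux; rewrite iter_partial_cst; exact: derivable_cst. Qed.

Lemma partialD {f g x} {i : 'I_n} :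
  derivable f x (delta_mx 0 i) -> derivable g x (delta_mx 0 i) ->
  partial i (fun y => f y + g y) x = partial i f x + partial i g x.
Proof. by move=> df dg; rewrite /partial; exact: (deriveD df dg). Qed.

Lemma partialB {f g x} {i : 'I_n} :
  derivable f x (delta_mx 0 i) -> derivable g x (delta_mx 0 i) ->
  partial i (fun y => f y - g y) x = partial i f x - partial i g x.
Proof. by move=> df dg; rewrite /partial; exact: (deriveB df dg). Qed.

Lemma partialM {f g x} {i : 'I_n} :
  derivable f x (delta_mx 0 i) -> derivable g x (delta_mx 0 i) ->
  partial i (fun y => f y * g y) x = partial i f x * g x + f x * partial i g x.
Proof.
move=> df dg; rewrite /partial.
have := deriveM df dg => /= ->.
by rewrite addrC [g x *: _]mulrC.
Qed.

Lemma iter_partialD {N f g} ws : smooth_upto N f -> smooth_upto N g ->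
  (size ws <= N.+1)%N ->
  eq_on (iter_partial ws (fun y => f y + g y))
        (fun y => iter_partial ws f y + iter_partial ws g y).
Proof.
move=> sf sg; elim: ws => [|i ws IH] //= hs x Ux.
by rewrite (partial_eq_on i (IH (ltnW hs)) x Ux) partialD //; [apply: sf|apply: sg].
Qed.

Lemma smooth_upto_add {N f g} :
  smooth_upto N f -> smooth_upto N g -> smooth_upto N (fun y => f y + g y).
Proof.
move=> sf sg ws hs x i Ux.
apply: (derivable_eq_on _ Ux (derivableD (sf ws hs x i Ux) (sg ws hs x i Ux))).
by move=> y Uy; rewrite (iter_partialD ws sf sg (leqW hs)).
Qed.

Lemma csmooth_add {f g} : csmooth f -> csmooth g -> csmooth (fun y => f y + g y).
Proof. by move=> sf sg N; apply: smooth_upto_add. Qed.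

(* By the product rule, a derivative of [f * g] is a sum of products of
   functions one order less smooth. *)
Lemma smooth_upto_mul {N f g} :
  smooth_upto N f -> smooth_upto N g -> smooth_upto N (fun y => f y * g y).
Proof.
elim: N f g => [|N IH] f g sf sg ws; case/lastP: ws => [_ x i Ux|ws j].
- by apply: derivableM; [exact: (sf [::])|exact: (sg [::])].
- by rewrite size_rcons.
- by apply: derivableM; [exact: (sf [::])|exact: (sg [::])].
rewrite size_rcons ltnS -cats1 iter_partial_cat /= => hs x i Ux.
have dfg : eq_on (partial j (fun y => f y * g y))
    (fun y => partial j f y * g y + f y * partial j g y).
  by move=> y Uy; apply: partialM; [exact: (sf [::])|exact: (sg [::])].
apply: (smooth_upto_eq_on (fun y Uy => esym (dfg y Uy))) hs x i Ux.
apply: smooth_upto_add; apply: IH.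
- exact: smooth_upto_partial.
- exact: smooth_upto_le (leqnSn N) sg.
- exact: smooth_upto_le (leqnSn N) sf.
- exact: smooth_upto_partial.
Qed.

Lemma csmooth_mul {f g} : csmooth f -> csmooth g -> csmooth (fun y => f y * g y).
Proof. by move=> sf sg N; apply: smooth_upto_mul. Qed.

Lemma csmooth_opp {f} : csmooth f -> csmooth (fun y => - f y).
Proof.
move=> sf; apply: (@csmooth_eq_on (fun y => -1 * f y)).
  by move=> y _; rewrite mulN1r.
by apply: csmooth_mul => //; exact: csmooth_cst.
Qed.

Lemma csmooth_sub {f g} : csmooth f -> csmooth g -> csmooth (fun y => f y - g y).
Proof. by move=> sf sg; apply: csmooth_add => //; apply: csmooth_opp. Qed.

Lemma csmooth_sum {I : Type} (r : seq I) (P : pred I) {F : I -> 'rV[R]_n -> R} :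
  (forall i, P i -> csmooth (F i)) ->
  csmooth (fun y => \sum_(i <- r | P i) F i y).
Proof.
move=> sF; elim: r => [|a r IH].
  have -> : (fun y => \sum_(i <- [::] | P i) F i y) = fun _ => 0.
    by apply/funext => y; rewrite big_nil.
  exact: csmooth_cst.
have -> : (fun y => \sum_(i <- a :: r | P i) F i y) = fun y =>
    if P a then F a y + \sum_(i <- r | P i) F i y else \sum_(i <- r | P i) F i y.
  by apply/funext => y; rewrite big_cons.
by case Pa: (P a); [exact (csmooth_add (sF a Pa) IH)|exact IH].
Qed.

Lemma iter_partial_sum ws {I : Type} (r : seq I) (P : pred I)
    {F : I -> 'rV[R]_n -> R} :
  (forall i, P i -> csmooth (F i)) ->
  eq_on (iter_partial ws (fun y => \sum_(i <- r | P i) F i y))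
        (fun y => \sum_(i <- r | P i) iter_partial ws (F i) y).
Proof.
move=> sF; elim: r => [|a r IH] x Ux.
  have -> : (fun y => \sum_(i <- [::] | P i) F i y) = fun _ => 0.
    by apply/funext => y; rewrite big_nil.
  by rewrite iter_partial_cst big_nil; case: ws.
rewrite big_cons; case Pa: (P a); last first.
  have -> : (fun y => \sum_(i <- a :: r | P i) F i y) =
            (fun y => \sum_(i <- r | P i) F i y).
    by apply/funext => y; rewrite big_cons Pa.
  exact: IH.
have -> : (fun y => \sum_(i <- a :: r | P i) F i y) =
          (fun y => F a y + \sum_(i <- r | P i) F i y).
  by apply/funext => y; rewrite big_cons Pa.
by rewrite (iter_partialD _ (sF a Pa _) (csmooth_sum r P sF _) (leqnSn _)) // IH.
Qed.

End CoordinateSmoothness.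

Lemma unshuffle_nil (V : nmodType) (n : nat) (F : seq 'I_n * seq 'I_n -> V) :
  \sum_(P <- unshuffle [::]) F P = F ([::], [::]).
Proof.
rewrite /unshuffle big_map big_enum /= (big_pred1 [tuple]) // => t.
by rewrite inE; apply/esym/eqP; exact: tuple0.
Qed.

Lemma unshuffle_cons (V : nmodType) (n : nat) (i : 'I_n) (W : seq 'I_n)
    (F : seq 'I_n * seq 'I_n -> V) :
  \sum_(P <- unshuffle (i :: W)) F P =
  \sum_(P <- unshuffle W) (F (i :: P.1, P.2) + F (P.1, i :: P.2)).
Proof.
have enumE (T : finType) : Finite.enum T = index_enum T.
  by rewrite [index_enum _]unlock.
rewrite /unshuffle !big_map !enumE.
pose h (q : bool * (size W).-tuple bool) := [tuple of q.1 :: q.2].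
have h_bij : bijective h.
  exists (fun t : (size W).+1.-tuple bool => (thead t, [tuple of behead t])).
    by case=> b t; congr pair; apply: val_inj.
  by move=> t; case/tupleP: t => b t; apply: val_inj.
rewrite (reindex h) /=; last exact: onW_bij.
rewrite -(pair_bigA _ (fun b t => F (mask (h (b, t)) (i :: W),
   mask (map negb (h (b, t))) (i :: W)))) /= big_bool /= big_split /=.
by rewrite addrC.
Qed.

(* For [B = 'I_r] this is [iter_cov] (convertibly); [B = unit] with [A = 0]
   gives plain iterated partial derivatives. *)
Definition iter_covB {R : realType} {n : nat} {B : finType}
  (A : 'I_n -> B -> B -> 'rV[R]_n -> R) (F0 : B -> 'rV[R]_n -> R)
  (S : seq 'I_n) : B -> 'rV[R]_n -> R :=
  foldr (fun i D b x => partial i (D b) x + \sum_(b' : B) A i b' b x * D b' x)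
    F0 S.

Lemma iter_covB0 {R : realType} {n : nat} {B : finType}
    (F0 : B -> 'rV[R]_n -> R) (S : seq 'I_n) (b : B) :
  iter_covB (fun _ _ _ _ => 0) F0 S b = iter_partial S (F0 b).
Proof.
elim: S b => [|i S IH] b //=; apply/funext => x.
by rewrite big1 ?addr0 ?IH // => b' _; rewrite mul0r.
Qed.

Section TwistedLeibniz.
Context {R : realType} {n : nat} {U : set 'rV[R]_n} {B : finType} (oU : open U).
Context {A : 'I_n -> B -> B -> 'rV[R]_n -> R} (sA : forall i b b', csmooth U (A i b b')).

Lemma csmooth_iter_covB {F0 : B -> 'rV[R]_n -> R} :
  (forall b, csmooth U (F0 b)) -> forall S b, csmooth U (iter_covB A F0 S b).
Proof.
move=> sF; elim=> [|i S IH] b //=.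
exact (csmooth_add oU (csmooth_partial i (IH b))
  (csmooth_sum oU _ _ (fun b' _ => csmooth_mul oU (sA i b' b) (IH b')))).
Qed.

Lemma iter_covB_mull {f} {F0 : B -> 'rV[R]_n -> R} :
  csmooth U f -> (forall b, csmooth U (F0 b)) -> forall S b,
  eq_on U (iter_covB A (fun b x => f x * F0 b x) S b)
    (fun x => \sum_(P <- unshuffle S)
       iter_partial P.1 f x * iter_covB A F0 P.2 b x).
Proof.
move=> sf sF; elim=> [|i W IH] b x Ux /=; first by rewrite unshuffle_nil.
rewrite unshuffle_cons (partial_eq_on oU i (IH b) x Ux).
under eq_bigr => b' _ do rewrite IH //.
have smooth_term (P : seq 'I_n * seq 'I_n) : true -> csmooth U
    (fun y => iter_partial P.1 f y * iter_covB A F0 P.2 b y).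
  by move=> _; exact (csmooth_mul oU (csmooth_iter_partial P.1 sf)
    (csmooth_iter_covB sF P.2 b)).
have := iter_partial_sum oU [:: i] (unshuffle W) xpredT smooth_term x Ux.
rewrite /= => ->.
under [X in _ + X]eq_bigr => b' _ do rewrite big_distrr.
rewrite /= exchange_big /= -big_split /=; apply: eq_bigr => P _.
rewrite partialM; last 2 first.
- exact: (csmooth_iter_partial _ sf 0%N [::]).
- exact: (csmooth_iter_covB sF _ _ 0%N [::]).
rewrite mulrDr big_distrr /=.
under [in RHS]eq_bigr => j _ do rewrite mulrCA.
ring.
Qed.

End TwistedLeibniz.

Lemma iter_partial_mul {R : realType} {n : nat} {U : set 'rV[R]_n} (oU : open U)
    {f g : 'rV[R]_n -> R} (ws : seq 'I_n) : csmooth U f -> csmooth U g ->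
  eq_on U (iter_partial ws (fun y => f y * g y))
    (fun x => \sum_(P <- unshuffle ws)
       iter_partial P.1 f x * iter_partial P.2 g x).
Proof.
move=> sf sg x Ux.
have := iter_covB_mull oU (A := fun _ _ _ _ => 0) (fun _ _ _ => csmooth_cst 0)
  (F0 := fun _ : unit => g) sf (fun=> sg) ws tt x Ux.
by rewrite !iter_covB0 => ->; under eq_bigr do rewrite iter_covB0.
Qed.

Definition flat_upto {R : realType} {n : nat} (U : set 'rV[R]_n) (p : 'rV[R]_n)
  (N : nat) (f : 'rV[R]_n -> R) :=
  csmooth U f /\ forall ws : seq 'I_n, (size ws <= N)%N -> iter_partial ws f p = 0.

Definition flat {R : realType} {n : nat} (U : set 'rV[R]_n) (p : 'rV[R]_n)
  (f : 'rV[R]_n -> R) := forall N, flat_upto U p N f.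

Definition eq_mod_flat {R : realType} {n : nat} (U : set 'rV[R]_n)
  (p : 'rV[R]_n) (f g : 'rV[R]_n -> R) := flat U p (fun y => f y - g y).

Section Flatness.
Context {R : realType} {n : nat} {U : set 'rV[R]_n} (oU : open U).
Context {p : 'rV[R]_n} (pU : U p).
Implicit Types (f g : 'rV[R]_n -> R) (ws : seq 'I_n).
Local Notation flat_upto := (flat_upto U p).
Local Notation flat := (flat U p).

Lemma flat_upto_eq_on {N f g} : eq_on U f g -> flat_upto N f -> flat_upto N g.
Proof.
move=> fg [sf vf]; split; first exact (csmooth_eq_on oU fg sf).
by move=> ws hs; rewrite -(iter_partial_eq_on oU ws fg p pU) vf.
Qed.

Lemma flat_upto_add {N f g} :
  flat_upto N f -> flat_upto N g -> flat_upto N (fun y => f y + g y).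
Proof.
move=> [sf vf] [sg vg]; split; first exact (csmooth_add oU sf sg).
move=> ws hs.
by rewrite (iter_partialD oU ws (sf _) (sg _) (leqnSn _) p pU) vf // vg // addr0.
Qed.

Lemma flat_upto_sum {N} {I : Type} {r : seq I} {P : pred I}
    {F : I -> 'rV[R]_n -> R} :
  (forall i, P i -> flat_upto N (F i)) ->
  flat_upto N (fun y => \sum_(i <- r | P i) F i y).
Proof.
move=> fF; have sF i Pi := (fF i Pi).1.
split; first exact (csmooth_sum oU r P sF).
move=> ws hs; rewrite (iter_partial_sum oU ws r P sF p pU).
by rewrite big1 // => i Pi; apply: (fF i Pi).2.
Qed.

(* A flat factor kills every term of the Leibniz expansion at [p]. *)
Lemma flat_upto_mull {N f g} :
  flat_upto N f -> csmooth U g -> flat_upto N (fun y => f y * g y).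
Proof.
move=> [sf vf] sg; split; first exact (csmooth_mul oU sf sg).
move=> ws hs; rewrite (iter_partial_mul oU ws sf sg p pU) big1_seq //.
move=> P /andP[_ /mapP[m _ ->]] /=; rewrite vf ?mul0r //.
exact: leq_trans (size_subseq (mask_subseq _ _)) hs.
Qed.

Lemma flat_upto_mulr {N f g} :
  csmooth U g -> flat_upto N f -> flat_upto N (fun y => g y * f y).
Proof.
move=> sg ff; apply: (flat_upto_eq_on _ (flat_upto_mull ff sg)).
by move=> y _; rewrite mulrC.
Qed.

Lemma flat_upto_sub {N f g} :
  flat_upto N f -> flat_upto N g -> flat_upto N (fun y => f y - g y).
Proof.
move=> ff fg; apply: (flat_upto_eq_on _
  (flat_upto_add ff (flat_upto_mulr (csmooth_cst (-1)) fg))).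
by move=> y _; rewrite mulN1r.
Qed.

Lemma flat_upto_partial {N f} i : flat_upto N.+1 f -> flat_upto N (partial i f).
Proof.
move=> [sf vf]; split; first exact (csmooth_partial i sf).
move=> ws hs; rewrite -[partial i f]/(iter_partial [:: i] f) -iter_partial_cat.
by rewrite vf // size_cat addn1.
Qed.

Lemma flat0 : flat (fun _ => 0).
Proof.
move=> N; split; first exact: csmooth_cst.
by move=> ws _; rewrite iter_partial_cst; case: ws.
Qed.

Lemma flat_at {f} : flat f -> f p = 0.
Proof. by move=> ff; apply: (ff 0%N).2 [::] isT. Qed.

Lemma flat_eq_on {f g} : eq_on U f g -> flat f -> flat g.
Proof. by move=> fg ff N; exact: flat_upto_eq_on fg (ff N). Qed.

Lemma flat_add {f g} : flat f -> flat g -> flat (fun y => f y + g y).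
Proof. by move=> ff fg N; exact: flat_upto_add. Qed.

Lemma flat_sub {f g} : flat f -> flat g -> flat (fun y => f y - g y).
Proof. by move=> ff fg N; exact: flat_upto_sub. Qed.

Lemma flat_sum {I : Type} (r : seq I) (P : pred I) {F : I -> 'rV[R]_n -> R} :
  (forall i, P i -> flat (F i)) -> flat (fun y => \sum_(i <- r | P i) F i y).
Proof. by move=> fF N; apply: flat_upto_sum => i Pi; exact: fF. Qed.

Lemma flat_mulr {f g} : csmooth U g -> flat f -> flat (fun y => g y * f y).
Proof. by move=> sg ff N; exact: flat_upto_mulr. Qed.

Lemma flat_sum2_mull {I J : finType} {F H : I -> J -> 'rV[R]_n -> R} :
  (forall i j, flat (F i j)) -> (forall i j, csmooth U (H i j)) ->
  flat (fun y => \sum_i \sum_j F i j y * H i j y).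
Proof.
move=> fF sH N; apply: flat_upto_sum => i _; apply: flat_upto_sum => j _.
exact: flat_upto_mull (fF i j N) (sH i j).
Qed.

Lemma eq_mod_flat_at {f g} : eq_mod_flat U p f g -> f p = g p.
Proof. by move/flat_at/eqP; rewrite subr_eq0 => /eqP. Qed.

Lemma eq_mod_flat_partial {f g} i : csmooth U f -> csmooth U g ->
  eq_mod_flat U p f g -> eq_mod_flat U p (partial i f) (partial i g).
Proof.
move=> sf sg e N; apply: (flat_upto_eq_on _ (flat_upto_partial i (e N.+1))).
by move=> x Ux; rewrite partialB //; [exact: (sf 0%N [::])|exact: (sg 0%N [::])].
Qed.

End Flatness.

Section CovariantDerivativeAtFlatPoint.
Context {R : realType} {n : nat} {U : set 'rV[R]_n} (oU : open U).
Context {B : finType} {G : 'I_n -> 'I_n -> 'I_n -> 'rV[R]_n -> R}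
  {A : 'I_n -> B -> B -> 'rV[R]_n -> R}.
Context (sG : forall i j k, csmooth U (G i j k)) (sA : forall i b b', csmooth U (A i b b')).
Context {F : cfield R n B} (sF : forall L Up b, csmooth U (F L Up b)).

Lemma csmooth_hc d S L Up b : csmooth U (hc G A F d S L Up b).
Proof.
elim: d S L Up b => [|d IH] [|i0 W] L Up b //=.
refine (csmooth_sub oU (csmooth_add oU (csmooth_sub oU (csmooth_add oU _ _) _) _) _).
- exact (csmooth_partial i0 (IH W L Up b)).
- exact (csmooth_sum oU _ _ (fun (b' : B) _ =>
    csmooth_mul oU (sA i0 b' b) (IH W L Up b'))).
- exact (csmooth_sum oU _ _ (fun (k : 'I_(size L)) _ => csmooth_sum oU _ _
    (fun (m : 'I_n) _ => csmooth_mul oU (sG i0 (nth i0 L k) m)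
       (IH W (set_nth m L k m) Up b)))).
- exact (csmooth_sum oU _ _ (fun (k : 'I_(size Up)) _ => csmooth_sum oU _ _
    (fun (m : 'I_n) _ => csmooth_mul oU (sG i0 m (nth i0 Up k))
       (IH W L (set_nth m Up k m) b)))).
- exact (csmooth_sum oU _ _ (fun (k : 'I_(size W)) _ => csmooth_sum oU _ _
    (fun (m : 'I_n) _ => csmooth_mul oU (sG i0 (nth i0 W k) m)
       (IH (set_nth m W k m) L Up b)))).
Qed.

Context {p : 'rV[R]_n} (pU : U p) (flG : forall i j k, flat U p (G i j k)).

(* The Christoffel correction terms have a flat factor, so only the
   twisted partial derivatives survive modulo flat functions. *)
Lemma hc_eq_mod_flat S L Up b :
  eq_mod_flat U p (hc G A F (size S) S L Up b) (iter_covB A (F L Up) S b).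
Proof.
elim: S L Up b => [|i0 W IH] L Up b /=.
  by apply: (flat_eq_on oU pU _ (flat0 (U := U) (p := p))) => y _; rewrite subrr.
have f0 := eq_mod_flat_partial oU pU i0 (csmooth_hc (size W) W L Up b)
  (csmooth_iter_covB oU sA (sF L Up) W b) (IH L Up b).
have fA := flat_sum oU pU (index_enum B) xpredT
  (fun b' _ => flat_mulr oU pU (sA i0 b' b) (IH L Up b')).
have f1 := flat_sum2_mull oU pU (fun (k : 'I_(size L)) m => flG i0 (nth i0 L k) m)
  (fun k m => csmooth_hc (size W) W (set_nth m L k m) Up b).
have f2 := flat_sum2_mull oU pU (fun (k : 'I_(size Up)) m => flG i0 m (nth i0 Up k))
  (fun k m => csmooth_hc (size W) W L (set_nth m Up k m) b).
have f3 := flat_sum2_mull oU pU (fun (k : 'I_(size W)) m => flG i0 (nth i0 W k) m)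
  (fun k m => csmooth_hc (size W) (set_nth m W k m) L Up b).
apply: (flat_eq_on oU pU _ (flat_sub oU pU (flat_add oU pU
  (flat_sub oU pU (flat_add oU pU f0 fA) f1) f2) f3)) => y _ /=.
rewrite [X in _ + X - _ + _ - _](eq_bigr _ (fun b' _ => mulrBr _ _ _)) sumrB.
ring.
Qed.

Lemma hc_at S L Up b :
  hc G A F (size S) S L Up b p = iter_covB A (F L Up) S b p.
Proof. exact: eq_mod_flat_at (hc_eq_mod_flat S L Up b). Qed.

End CovariantDerivativeAtFlatPoint.

Section HigherChristoffel.
Context {R : realType} {n : nat} {U : set 'rV[R]_n} (oU : open U).
Context {G : 'I_n -> 'I_n -> 'I_n -> 'rV[R]_n -> R}.
Context (sG : forall i j k, csmooth U (G i j k)).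

Lemma csmooth_vecfield j L Up b : csmooth U (@vecfield R n j L Up b).
Proof. by rewrite /vecfield; case: Up => [|k [|? ?]]; exact: csmooth_cst. Qed.

Lemma csmooth_chr k W j : csmooth U (chr G k W j).
Proof.
exact (csmooth_hc oU (A := fun _ _ _ _ => 0) sG (fun _ _ _ => csmooth_cst 0)
  (csmooth_vecfield j) (size W) W [::] [:: k] tt).
Qed.

Lemma chr_cons i W j k x : chr G k (i :: W) j x =
  partial i (chr G k W j) x + \sum_(m < n) G i m k x * chr G m W j x
  - \sum_(l < size W) \sum_(m < n)
      G i (nth i W l) m x * chr G k (set_nth m W l m) j x.
Proof.
rewrite /chr /hcovT /hcov /= big_ord0 big_ord1 big1 ?mul0r ?addr0 ?subr0 //.
congr (_ - _); apply: eq_bigr => l _; apply: eq_bigr => m _.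
  by rewrite size_set_nth (maxn_idPr (ltn_ord l)).
by move=> *; rewrite mul0r.
Qed.

Lemma G_chr i j k x : G i j k x = chr G k [:: i] j x.
Proof.
rewrite chr_cons /= big_ord0 subr0.
have -> : partial i (chr G k [::] j) x = 0 by exact: derive_cst.
rewrite add0r (bigD1 j) //= /chr /hcovT /hcov /vecfield /= eqxx mulr1.
by rewrite big1 ?addr0 // => m /negbTE ->; rewrite mulr0.
Qed.

Context {p : 'rV[R]_n} (pU : U p).
Context (chr_p : forall W j k, W != [::] -> chr G k W j p = 0).

(* Induction on the order: by [chr_cons], a derivative of a Christoffel symbol
   is a symbol of a longer word plus products of [G] with symbols that are flat
   to one order less. *)
Lemma chr_flat_upto N W j k : W != [::] -> flat_upto U p N (chr G k W j).
Proof.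
move=> W0; split=> [|ws]; first exact (csmooth_chr k W j).
elim: N ws W j k W0 => [|N IH] ws W j k W0; first by case: ws => // _; exact: chr_p.
case/lastP: ws => [_|ws i]; first exact: chr_p.
rewrite size_rcons ltnS -cats1 iter_partial_cat => hs.
have fchr W' j' k' : W' != [::] -> flat_upto U p N (chr G k' W' j').
  by move=> W'0; split=> [|ws' hs']; [exact (csmooth_chr k' W' j')|exact: IH].
have [_ -> //] : flat_upto U p N (partial i (chr G k W j)).
apply: (flat_upto_eq_on oU pU (f := fun x => chr G k (i :: W) j x
  - \sum_(m < n) G i m k x * chr G m W j x
  + \sum_(l < size W) \sum_(m < n)
      G i (nth i W l) m x * chr G k (set_nth m W l m) j x)).
  by move=> x _; rewrite chr_cons; ring.
apply: (flat_upto_add oU pU); first apply: (flat_upto_sub oU pU).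
- exact: fchr.
- apply (flat_upto_sum oU pU) => m _.
  exact (flat_upto_mulr oU pU (sG i m k) (fchr W j m W0)).
- apply (flat_upto_sum oU pU) => l _; apply (flat_upto_sum oU pU) => m _.
  apply: (flat_upto_mulr oU pU (sG _ _ _)); apply: fchr.
  by rewrite -size_eq0 size_set_nth -lt0n leq_max.
Qed.

Lemma chr_flat W j k : W != [::] -> flat U p (chr G k W j).
Proof. by move=> W0 N; exact: chr_flat_upto. Qed.

Lemma G_flat i j k : flat U p (G i j k).
Proof.
exact (flat_eq_on oU pU (fun x _ => esym (G_chr i j k x)) (chr_flat [:: i] j k isT)).
Qed.

End HigherChristoffel.

Lemma derive_affine_along {R : realType} {V : normedModType R} (g : V -> R)
    (x v : V) (c : R) :
  (forall h : R, g (h *: v + x) = g x + h * c) -> derivable g x v /\ 'D_v g x = c.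
Proof.
move=> affine_g.
have quotE : (fun h : R => h^-1 *: ((g \o shift x) (h *: v) - g x)) =
             (fun h => h^-1 * h * c).
  by apply/funext => h /=; rewrite affine_g addrC addKr -mulrA.
have quot_cvg : (fun h : R => h^-1 *: ((g \o shift x) (h *: v) - g x)) @ 0^' --> c.
  rewrite quotE; apply: cvg_trans _ (@cvg_cst _ c R 0^' _).
  apply: near_eq_cvg; near=> h; rewrite mulVf ?mul1r //.
  near: h; exact: nbhs_dnbhs_neq.
split; first by apply/cvg_ex; exists c.
exact: cvg_lim quot_cvg.
Unshelve. all: by end_near.
Qed.

Section Monomials.
Context {R : realType} {n : nat} (p : 'rV[R]_n).
Implicit Types (T : 'I_n -> nat) (S : seq 'I_n) (x : 'rV[R]_n).

Definition decr (j : 'I_n) T : 'I_n -> nat :=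
  fun i => if i == j then (T i).-1 else T i.

(* Truncated subtraction: [msub T S] is only meaningful when [letters S <= T]. *)
Definition msub T S : 'I_n -> nat := fun k => (T k - letters S k)%N.

Lemma monomial_decr T (j : 'I_n) t x : T j = t.+1 ->
  monomial p (decr j T) x =
  t.+1%:R * (x ord0 j - p ord0 j) ^+ t
  * \prod_(i < n | i != j) (x ord0 i - p ord0 i) ^+ T i
  / (\prod_(i < n) (T i)`!)%:R.
Proof.
move=> Tj; rewrite /monomial !(bigD1 j (P := predT)) //= /decr eqxx Tj /=.
rewrite (eq_bigr (fun i => (x ord0 i - p ord0 i) ^+ T i)) => [|i /negbTE ->] //.
rewrite (eq_bigr (fun i => (T i)`!)) => [|i /negbTE ->] //.
have fact_neq0 m : (m`!%:R : R) != 0 by rewrite pnatr_eq0 -lt0n fact_gt0.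
have prod_neq0 : ((\prod_(i < n | i != j) (T i)`!)%:R : R) != 0.
  by rewrite pnatr_eq0 -lt0n prodn_gt0 // => i; rewrite fact_gt0.
rewrite factS !natrM; field.
by rewrite fact_neq0 prod_neq0 [1 + _]addrC natr1 pnatr_eq0.
Qed.

Lemma monomial_partial T (j : 'I_n) x :
  derivable (monomial p T) x (delta_mx 0 j) /\
  partial j (monomial p T) x =
    (if T j is t.+1 then monomial p (decr j T) x else 0).
Proof.
pose Q (y : 'rV[R]_n) := \prod_(i < n | i != j) (y ord0 i - p ord0 i) ^+ T i.
pose q (y : 'rV[R]_n) := y ord0 j - p ord0 j.
pose c := ((\prod_(i < n) (T i)`!)%:R : R).
have monomialE : monomial p T = fun y => (q y ^+ T j * Q y) * c^-1.
  by apply/funext => y; rewrite /monomial (bigD1 j).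
have coord_line i h : (h *: delta_mx 0 j + x) ord0 i - p ord0 i =
    (x ord0 i - p ord0 i) + h * (i == j)%:R.
  by rewrite !mxE eqxx /=; ring.
have [dQ DQ] : derivable Q x (delta_mx 0 j) /\ 'D_(delta_mx 0 j) Q x = 0.
  apply: derive_affine_along => h; rewrite mulr0 addr0; apply: eq_bigr => i ij.
  by rewrite coord_line (negbTE ij) mulr0 addr0.
have [dq Dq] : derivable q x (delta_mx 0 j) /\ 'D_(delta_mx 0 j) q x = 1.
  by apply: derive_affine_along => h; rewrite /q coord_line eqxx mulr1.
have qXE : (fun y => q y ^+ T j) = q ^+ T j by rewrite exprfctE.
have dqX : derivable (fun y => q y ^+ T j) x (delta_mx 0 j).
  by rewrite qXE; apply: derivableX.
have DqX : partial j (fun y => q y ^+ T j) x = (T j)%:R * q x ^+ (T j).-1.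
  by rewrite /partial qXE deriveX // Dq /GRing.scale /= mulr1.
have dqXQ : derivable (fun y => q y ^+ T j * Q y) x (delta_mx 0 j).
  exact: derivableM.
have dc : derivable (fun _ : 'rV[R]_n => c^-1) x (delta_mx 0 j).
  exact: derivable_cst.
rewrite monomialE; split; first exact: derivableM.
rewrite (partialM dqXQ dc) (partialM dqX dQ) DqX.
have -> : partial j (fun _ : 'rV[R]_n => c^-1) x = 0 by exact: derive_cst.
rewrite /partial DQ mulr0 !addr0 mulr0 addr0.
case Tj: (T j) => [|t]; first by rewrite !mul0r.
by rewrite (monomial_decr _ _ _ _ Tj).
Qed.

Lemma iter_partial_monomial S T : iter_partial S (monomial p T) =
  fun x => if [forall k, (letters S k <= T k)%N] then monomial p (msub T S) x
           else 0.
Proof.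
elim: S => [|i S IH] /=.
  apply/funext => x; rewrite ifT; last by apply/forallP.
  by congr monomial; apply/funext => k; rewrite /msub subn0.
rewrite IH; apply/funext => x.
case C: [forall k, (letters S k <= T k)%N]; last first.
  rewrite ifF; first exact: derive_cst.
  apply/negbTE/negP => /forallP H; move/negbT: C => /negP; apply.
  by apply/forallP => k; move: (H k) => /=; apply: leq_trans; exact: leq_addl.
have [_ ->] := monomial_partial (msub T S) i x.
rewrite {1}/msub; case E: (T i - letters S i)%N => [|t].
  rewrite ifF //; apply/negbTE/negP => /forallP/(_ i) /=; rewrite eqxx add1n.
  by move/eqP: E; rewrite subn_eq0 => E1 E2; have := leq_trans E2 E1; rewrite ltnn.
rewrite ifT.
  congr monomial; apply/funext => k; rewrite /decr /msub /= -/(letters S k).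
  case: eqP => [->|/eqP ik]; first by rewrite eqxx add1n subnS.
  by rewrite eq_sym (negbTE ik) add0n.
apply/forallP => k /=; case: eqP => [<-|_].
  by rewrite add1n -subn_gt0 E.
by rewrite add0n; exact: (forallP C k).
Qed.

Lemma monomial_at T : monomial p T p = if [forall k, T k == 0%N] then 1 else 0.
Proof.
rewrite /monomial; case: ifP => [/forallP T0|/negbT].
  rewrite !big1 => [|k _|k _]; rewrite ?(eqP (T0 k)) ?expr0 //.
  by rewrite mul1r invr1.
rewrite negb_forall => /existsP [k Tk].
by rewrite (bigD1 k) //= subrr expr0n (negbTE Tk) !mul0r.
Qed.

Lemma iter_partial_monomial_at S T :
  iter_partial S (monomial p T) p = kdelta (letters S) T.
Proof.
rewrite iter_partial_monomial /kdelta monomial_at.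
case: ifP => [/forallP C|/negbT C].
  apply/esym; case: ifP => [/forallP H|/negbT].
    by rewrite ifT //; apply/forallP => k; rewrite /msub (eqP (H k)) subnn.
  rewrite negb_forall => /existsP [k /eqP Hk].
  rewrite ifF //; apply/negbTE; rewrite negb_forall; apply/existsP; exists k.
  rewrite /msub subn_eq0; apply/negP => H; apply: Hk; apply/eqP.
  by rewrite eqn_leq H (C k).
rewrite ifF //; apply/negbTE/negP => /forallP H; move: C => /negP; apply.
by apply/forallP => k; rewrite (eqP (H k)).
Qed.

Lemma csmooth_monomial (U : set 'rV[R]_n) T : csmooth U (monomial p T).
Proof.
move=> N ws _ x i _; rewrite iter_partial_monomial.
case: [forall k, (letters ws k <= T k)%N]; last exact: derivable_cst.
exact: (monomial_partial _ i x).1.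
Qed.

End Monomials.

Section NormalCoordinates.
Context {R : realType} {n : nat} {U : set 'rV[R]_n} (oU : open U).
Context {p : 'rV[R]_n} (pU : U p).
Context {G : 'I_n -> 'I_n -> 'I_n -> 'rV[R]_n -> R}.
Context (sG : forall i j k, csmooth U (G i j k)).
Context (chr_p : forall W j k, W != [::] -> chr G k W j p = 0).

Lemma hcovT_at (F : cfield R n unit) : (forall L Up b, csmooth U (F L Up b)) ->
  forall S L Up, hcovT G F S L Up tt p = iter_partial S (F L Up tt) p.
Proof.
move=> sF S L Up; rewrite /hcovT /hcov -(iter_covB0 (F L Up) S tt).
exact (hc_at oU (A := fun _ _ _ _ => 0) sG (fun _ _ _ => csmooth_cst 0) sF pU
  (G_flat oU sG pU chr_p) S L Up tt).
Qed.

Lemma hcovT_flat_at (F : cfield R n unit) : (forall L Up b, flat U p (F L Up b)) ->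
  forall S L Up, hcovT G F S L Up tt p = 0.
Proof.
move=> fF S L Up; rewrite hcovT_at => [|L' Up' b]; last exact: (fF L' Up' b 0%N).1.
exact: (fF L Up tt (size S)).2 S (leqnn _).
Qed.

Lemma hcovT_chr_at S W j k : W != [::] ->
  hcovT G (scalarfield (chr G k W j)) S [::] [::] tt p = 0.
Proof.
by move=> W0; apply: hcovT_flat_at => *; exact (chr_flat oU sG pU chr_p W j k W0).
Qed.

Lemma hcovT_Rcomp_at S a b c d : hcovT G (Rcomp G) S [:: a; b; c] [:: d] tt p = 0.
Proof.
apply: hcovT_flat_at => L Up u; rewrite /Rcomp.
case: L => [|a' [|b' [|c' [|? ?]]]]; try exact: flat0.
case: Up => [|d' [|? ?]]; try exact: flat0.
exact (flat_sub oU pU (chr_flat oU sG pU chr_p [:: a'; b'] c' d' isT)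
  (chr_flat oU sG pU chr_p [:: b'; a'] c' d' isT)).
Qed.

Lemma hcovT_monomial_at S T :
  hcovT G (scalarfield (monomial p T)) S [::] [::] tt p = kdelta (letters S) T.
Proof.
rewrite hcovT_at; first exact: iter_partial_monomial_at.
by move=> *; exact: csmooth_monomial.
Qed.

Context {r : nat} {A : 'I_n -> 'I_r -> 'I_r -> 'rV[R]_n -> R}.
Context (sA : forall i b b', csmooth U (A i b b')).

Lemma hcov_section_at (al : 'I_r -> 'rV[R]_n -> R) :
  (forall b, csmooth U (al b)) ->
  forall S b, hcov G A (sectionf al) S [::] [::] b p = iter_covB A al S b p.
Proof.
move=> sal S b.
exact (hc_at oU sG sA (F := sectionf al) (fun _ _ => sal) pU
  (G_flat oU sG pU chr_p) S [::] [::] b).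
Qed.

Lemma hcov_monomial_section_at S T (al : 'I_r -> 'rV[R]_n -> R) :
  (forall b, csmooth U (al b)) -> forall b,
  hcov G A (sectionf (fun b x => monomial p T x * al b x)) S [::] [::] b p
  = \sum_(P <- unshuffle S)
      kdelta (letters P.1) T * hcov G A (sectionf al) P.2 [::] [::] b p.
Proof.
move=> sal b; rewrite hcov_section_at => [|b']; last first.
  exact (csmooth_mul oU (csmooth_monomial p U T) (sal b')).
rewrite (iter_covB_mull oU sA (csmooth_monomial p U T) sal S b p pU).
by apply: eq_bigr => P _; rewrite iter_partial_monomial_at hcov_section_at.
Qed.

End NormalCoordinates.

Theorem lemma2p14 (R : realType) (n : nat) (U : set 'rV[R]_n) (p : 'rV[R]_n)
  (G : 'I_n -> 'I_n -> 'I_n -> 'rV[R]_n -> R)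
  (r : nat) (A : 'I_n -> 'I_r -> 'I_r -> 'rV[R]_n -> R) :
  open U -> U p ->
  (forall i j k, smooth_on U (G i j k)) ->
  (forall i j k x, U x -> G i j k x = G j i k x) ->
  (forall i b b', smooth_on U (A i b b')) ->
  (forall (W : seq 'I_n) (j k : 'I_n), W != [::] -> chr G k W j p = 0) ->
  (forall (S W : seq 'I_n) (j k : 'I_n), W != [::] ->
      hcovT G (scalarfield (chr G k W j)) S [::] [::] tt p = 0)
  /\ (forall (S : seq 'I_n) (a b c d : 'I_n),
      hcovT G (Rcomp G) S [:: a; b; c] [:: d] tt p = 0)
  /\ (forall (S : seq 'I_n) (al : 'I_r -> 'rV[R]_n -> R),
      (forall b, smooth_on U (al b)) ->
      forall b, hcov G A (sectionf al) S [::] [::] b p = iter_cov A S al b p)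
  /\ (forall (S : seq 'I_n) (T : 'I_n -> nat),
      hcovT G (scalarfield (monomial p T)) S [::] [::] tt p
      = kdelta (letters S) T)
  /\ (forall (S : seq 'I_n) (T : 'I_n -> nat) (al : 'I_r -> 'rV[R]_n -> R),
      (forall b, smooth_on U (al b)) ->
      forall b,
      hcov G A (sectionf (fun b x => monomial p T x * al b x)) S [::] [::] b p
      = \sum_(P <- unshuffle S)
          kdelta (letters P.1) T * hcov G A (sectionf al) P.2 [::] [::] b p).
Proof.
move=> oU pU smooth_G _ smooth_A chr_p.
have sG i j k := smooth_on_csmooth (smooth_G i j k).
have sA i b b' := smooth_on_csmooth (smooth_A i b b').
split; first exact (hcovT_chr_at oU pU sG chr_p).
split; first exact (hcovT_Rcomp_at oU pU sG chr_p).
split.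
  move=> S al sal b.
  exact (hcov_section_at oU pU sG chr_p sA al (fun b => smooth_on_csmooth (sal b)) S b).
split; first exact (hcovT_monomial_at oU pU sG chr_p).
move=> S T al sal.
exact (hcov_monomial_section_at oU pU sG chr_p sA S T al
  (fun b => smooth_on_csmooth (sal b))).
Qed.
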